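(* Let $\alpha>0$, $M,\tilde M>0$ with $M/\tilde M\ge(1-5^{-\alpha})^{-1}\bigl(1+\frac{1}{5^\alpha-3^\alpha}\bigr)80^\alpha$, and let $n\ge1$. With the construction below, for every $\mathcal Z_{\boldsymbol\kappa_{\bar a},\bar a}\in\mathcal U_{\bar a}$, the function $y=y_{\mathcal C}(\cdot\mid\boldsymbol\kappa_{\bar a},\bar a)$ has unique maximizer $\mathbf{x}^*=\mathbf{c}_{\boldsymbol\kappa_{\bar a},\bar a}$ on $[0,1]^d$ and satisfies $\tilde M\|\mathbf{x}^*-\mathbf{x}\|_\infty^\alpha\le|y(\mathbf{x}^* )-y(\mathbf{x})|\le M\|\mathbf{x}^*-\mathbf{x}\|_\infty^\alpha$ for all $\mathbf{x}\in[0,1]^d$.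
   Context: $\|\mathbf{x}\|_\infty=\max_l|x_l|$. Let $\Delta=\lfloor3^d/2\rfloor$, $\bar a=\lceil4(n+1)/\Delta\rceil+2$, $\gamma_a=5^{-a}/2$, $\hat M=\frac{40^\alpha}{5^\alpha-3^\alpha}\tilde M$. For $a=0,\dots,\bar a$ and $\boldsymbol\kappa_a\in\{1,\dots,5^a\}^d$ let $\mathbf{c}_{\boldsymbol\kappa_a,a}=((2\kappa_{1,a}-1)\gamma_a,\dots,(2\kappa_{d,a}-1)\gamma_a)$ and $\mathcal Z_{\boldsymbol\kappa_a,a}=\{\mathbf{x}\in[0,1]^d:\|\mathbf{x}-\mathbf{c}_{\boldsymbol\kappa_a,a}\|_\infty<\gamma_a\}$. For $a\ge1$, $\mathcal P(\boldsymbol\kappa_a)$ is the level-$(a-1)$ index with $\mathcal Z_{\boldsymbol\kappa_a,a}\subset\mathcal Z_{\mathcal P(\boldsymbol\kappa_a),a-1}$, $\mathcal P^\ell$ its iterate. $\mathcal U_0=\{\mathcal Z_{\mathbf 1,0}\}$; for $a\ge1$, $\mathcal U_a=\{\mathcal Z_{\boldsymbol\kappa_a,a}:\mathcal Z_{\mathcal P(\boldsymbol\kappa_a),a-1}\in\mathcal U_{a-1},\ \|\mathbf{c}_{\boldsymbol\kappa_a,a}-\mathbf{c}_{\mathcal P(\boldsymbol\kappa_a),a-1}\|_\infty\le2\gamma_a\}$. Components on $[0,1]^d$: $y_{\mathcal S}(\mathbf{x}\mid\mathbf 1,0)=\hat M(5^\alpha-3^\alpha)\gamma_1^\alpha$ if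 $\|\mathbf{x}-\mathbf{c}_{\mathbf 1,0}\|_\infty\le3\gamma_1$, $=\hat M5^\alpha\gamma_1^\alpha-\hat M\|\mathbf{x}-\mathbf{c}_{\mathbf 1,0}\|_\infty^\alpha$ if $3\gamma_1\le\|\mathbf{x}-\mathbf{c}_{\mathbf 1,0}\|_\infty\le5\gamma_1$; for $1\le a\le\bar a-1$, $y_{\mathcal S}(\mathbf{x}\mid\boldsymbol\kappa_a,a)=\hat M(5^\alpha-3^\alpha)\gamma_{a+1}^\alpha$ if $\|\mathbf{x}-\mathbf{c}_{\boldsymbol\kappa_a,a}\|_\infty\le3\gamma_{a+1}$, $=\hat M5^\alpha\gamma_{a+1}^\alpha-\hat M\|\mathbf{x}-\mathbf{c}_{\boldsymbol\kappa_a,a}\|_\infty^\alpha$ if $3\gamma_{a+1}<\|\cdot\|_\infty\le5\gamma_{a+1}$, $=0$ otherwise; $y_{\mathcal D}(\mathbf{x}\mid\boldsymbol\kappa_{\bar a},\bar a)=\hat M\gamma_{\bar a}^\alpha-\hat M\|\mathbf{x}-\mathbf{c}_{\boldsymbol\kappa_{\bar a},\bar a}\|_\infty^\alpha$ if $\|\mathbf{x}-\mathbf{c}_{\boldsymbol\kappa_{\bar a},\bar a}\|_\infty\le\gamma_{\bar a}$, $=0$ otherwise. $y_{\mathcal C}(\mathbf{x}\mid\boldsymbol\kappa_{\bar a},\bar a)=y_{\mathcal D}(\mathbf{x}\mid\boldsymbol\kappa_{\bar a},\bar a)+\sum_{\ell=1}^{\bar a-1}y_{\mathcal S}(\mathbf{x}\mid\mathcal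 P^\ell(\boldsymbol\kappa_{\bar a}),\bar a-\ell)+y_{\mathcal S}(\mathbf{x}\mid\mathbf 1,0)$. *)

From HB Require Import structures.
From mathcomp Require Import all_boot all_order all_algebra.
From mathcomp Require Import all_classical all_reals all_analysis.
Set Implicit Arguments. Unset Strict Implicit. Unset Printing Implicit Defensive.
Import Order.TTheory GRing.Theory Num.Theory.
Local Open Scope ring_scope.

Section Construction.
Variables (R : realType) (d : nat) (alpha Mt : R).

Definition gam (a : nat) : R := (5%:R ^- a) / 2.

Definition linf (x : 'rV[R]_d) : R := \big[Num.max/0]_(i < d) `|x ord0 i|.

Definition in_cube (x : 'rV[R]_d) : Prop := forall i : 'I_d, 0 <= x ord0 i <= 1.

Definition ctr (k : 'I_d -> nat) (a : nat) : 'rV[R]_d :=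
  \row_i ((2 * (k i)%:R - 1) * gam a).

Definition ones : 'I_d -> nat := fun _ => 1%N.

(* parent index P(kappa): the level-(a-1) cell containing cell kappa,
   i.e. componentwise ceil(kappa_i / 5) *)
Definition parent (k : 'I_d -> nat) : 'I_d -> nat := fun i => ((k i + 4) %/ 5)%N.

Fixpoint inU (a : nat) (k : 'I_d -> nat) : bool :=
  match a with
  | 0 => [forall i, k i == 1%N]
  | a'.+1 => [forall i, (1 <= k i <= 5 ^ a'.+1)%N] && inU a' (parent k)
             && (linf (ctr k a'.+1 - ctr (parent k) a') <= 2 * gam a'.+1)
  end.

Definition Mhat : R := 40 `^ alpha / (5 `^ alpha - 3 `^ alpha) * Mt.

(* y_S(x | 1, 0) (both branches as in the paper; on [0,1]^d the distance is <= 5 gamma_1) *)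
Definition yS0 (x : 'rV[R]_d) : R :=
  let r := linf (x - ctr ones 0) in
  if r <= 3 * gam 1 then Mhat * (5 `^ alpha - 3 `^ alpha) * gam 1 `^ alpha
  else Mhat * 5 `^ alpha * gam 1 `^ alpha - Mhat * r `^ alpha.

Definition yS (k : 'I_d -> nat) (a : nat) (x : 'rV[R]_d) : R :=
  let r := linf (x - ctr k a) in
  if r <= 3 * gam a.+1 then Mhat * (5 `^ alpha - 3 `^ alpha) * gam a.+1 `^ alpha
  else if r <= 5 * gam a.+1 then Mhat * 5 `^ alpha * gam a.+1 `^ alpha - Mhat * r `^ alpha
  else 0.

Definition yD (k : 'I_d -> nat) (a : nat) (x : 'rV[R]_d) : R :=
  let r := linf (x - ctr k a) in
  if r <= gam a then Mhat * gam a `^ alpha - Mhat * r `^ alpha else 0.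

Definition yC (k : 'I_d -> nat) (a : nat) (x : 'rV[R]_d) : R :=
  yD k a x + \sum_(1 <= l < a) yS (iter l parent k) (a - l) x + yS0 x.

End Construction.

(* Delta = floor(3^d / 2);  abar = ceil(4(n+1)/Delta) + 2  (ceil via nat division) *)
Definition Delta (d : nat) : nat := (3 ^ d)./2.
Definition abar (d n : nat) : nat :=
  ((4 * (n + 1) + Delta d - 1) %/ Delta d + 2)%N.

From HB Require Import structures.
From mathcomp Require Import all_boot all_order all_algebra.
From mathcomp Require Import all_classical all_reals all_analysis.
From mathcomp Require Import ring lra.
Set Implicit Arguments. Unset Strict Implicit. Unset Printing Implicit Defensive.
Import Order.TTheory GRing.Theory Num.Theory.
Local Open Scope ring_scope.

(** y is the sum of a cusp Mhat (gamma_abar^alpha - |x - x*|^alpha) near x*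
   and of one bump per level j < abar, of height 40^alpha Mt gamma_(j+1)^alpha,
   constant on the ball of radius 3 gamma_(j+1) around the level-j center and
   nonpositive beyond radius 5 gamma_(j+1).  Consecutive centers are at most
   2 gamma_(j+1) apart, so x* lies within 5/2 gamma_(j+1) of the level-j center
   and sits on every plateau.  At distance r from x*, only the bumps with
   gamma_(j+1) < 2r can drop, each by at most its height: a geometric series
   of order r^alpha, which together with the cusp gives the upper bound.
   Conversely, either r <= 15/2 gamma_abar and the cusp alone drops by
   Mt r^alpha, or 15/2 gamma_(a+1) <= r < 15/2 gamma_a for some level a, whose
   bump then drops by its full height 40^alpha Mt gamma_(a+1)^alpha
   = Mt (8 gamma_a)^alpha >= Mt r^alpha. *)

Section SupNorm.
Variables (R : realType) (d : nat).
Implicit Types x y z : 'rV[R]_d.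

Lemma linf_ge0 x : 0 <= linf x.
Proof. by rewrite /linf; elim/big_ind: _ => //= a b a0 b0; rewrite le_max a0. Qed.

Lemma linf_le x c : 0 <= c -> (forall i, `|x ord0 i| <= c) -> linf x <= c.
Proof. by move=> c0 xc; apply: bigmax_le. Qed.

Lemma ler_linf x i : `|x ord0 i| <= linf x.
Proof. by rewrite /linf (bigD1 i) //= le_max lexx. Qed.

Lemma linf0 : linf (0 : 'rV[R]_d) = 0.
Proof. by apply/le_anti; rewrite linf_ge0 linf_le // => i; rewrite mxE normr0. Qed.

Lemma linf_distC x y : linf (x - y) = linf (y - x).
Proof.
have le_dist (u v : 'rV[R]_d) : linf (u - v) <= linf (v - u).
  apply: linf_le => [|i]; first exact: linf_ge0.
  by apply: le_trans (ler_linf _ i); rewrite !mxE distrC.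
by apply/le_anti; rewrite !le_dist.
Qed.

Lemma linf_dist_triangle x y z : linf (x - z) <= linf (x - y) + linf (y - z).
Proof.
apply: linf_le => [|i]; first by rewrite addr_ge0 ?linf_ge0.
have := ler_linf (x - y) i; have := ler_linf (y - z) i; rewrite !mxE => yz xy.
by apply: le_trans (ler_distD (y ord0 i) _ _) _; rewrite lerD.
Qed.

Lemma linf_dist_gt0 x y : x != y -> 0 < linf (x - y).
Proof.
move=> xy; rewrite lt_neqAle linf_ge0 andbT; apply: contra xy => /eqP/esym xy0.
apply/eqP/rowP => i; apply/eqP; rewrite -subr_eq0 -normr_le0.
by have := ler_linf (x - y) i; rewrite xy0 !mxE.
Qed.

Lemma linf_cube_dist x y : in_cube x -> in_cube y -> linf (x - y) <= 1.
Proof.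
move=> cx cy; apply: linf_le => // i; rewrite !mxE ler_norml.
by have /andP[] := cx i; have /andP[] := cy i; lra.
Qed.

End SupNorm.

Lemma gam_gt0 (R : realType) a : 0 < gam R a.
Proof. by rewrite divr_gt0 // invr_gt0 exprn_gt0. Qed.

Lemma gamS (R : realType) a : gam R a.+1 = gam R a / 5.
Proof. rewrite /gam exprS invfM; ring. Qed.

Lemma gam0 (R : realType) : gam R 0 = 1 / 2.
Proof. by rewrite /gam expr0 invr1. Qed.

Lemma inU_index_bounds (R : realType) d a (k : 'I_d -> nat) :
  inU R a k -> forall i, (1 <= k i <= 5 ^ a)%N.
Proof.
case: a => [/forallP k1 i | a /andP[/andP[/forallP kb _] _] //].
by rewrite (eqP (k1 i)).
Qed.

Lemma ctr_in_cube (R : realType) d (k : 'I_d -> nat) a :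
  (forall i, 1 <= k i <= 5 ^ a)%N -> in_cube (ctr R k a).
Proof.
move=> kb i; rewrite mxE /gam; have /andP[k1 k5] := kb i.
have {}k1 : 1 <= (k i)%:R :> R by rewrite ler1n.
have {}k5 : (k i)%:R <= 5%:R ^+ a :> R by rewrite -natrX ler_nat.
have F0 : 0 < 5%:R ^+ a :> R by rewrite exprn_gt0.
have -> : (2 * (k i)%:R - 1) * (5%:R ^- a / 2) = (2 * (k i)%:R - 1) / (2 * 5%:R ^+ a) :> R.
  by field; rewrite gt_eqF.
by rewrite divr_ge0 ?ler_pdivrMr ?mulr_gt0 ?mulr_ge0 ?(ltW F0) //=; lra.
Qed.

Lemma cube_dist_ctr0 (R : realType) d (x : 'rV[R]_d) :
  in_cube x -> linf (x - ctr R (@ones d) 0) <= 1 / 2.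
Proof.
move=> cx; apply: linf_le => // i; rewrite !mxE gam0 /ones mulr1n ler_norml.
by have /andP[] := cx i; lra.
Qed.

Lemma exists_crossing (R : realDomainType) (f : nat -> R) r m :
  f m <= r -> r < f 0%N -> exists2 a, (a < m)%N & f a.+1 <= r < f a.
Proof.
elim: m => [|m IH] fm rf0; first by have := lt_le_trans rf0 fm; rewrite ltxx.
have [fmr | rfm] := leP (f m) r; last by exists m; rewrite ?fm.
by have [a am ar] := IH fmr rf0; exists a => //; apply: ltnW.
Qed.

Section Profiles.
Variables (R : realType) (alpha Mt : R).
Hypotheses (alpha_gt0 : 0 < alpha) (Mt_gt0 : 0 < Mt).
Local Notation Mh := (Mhat alpha Mt).

Lemma ler_powR_alpha (x y : R) : 0 <= x -> x <= y -> x `^ alpha <= y `^ alpha.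
Proof.
move=> x0 xy; apply: (ge0_ler_powR (ltW alpha_gt0)); rewrite ?nnegrE //.
exact: le_trans xy.
Qed.

Lemma ltr_powR_alpha (x y : R) : 0 <= x -> x < y -> x `^ alpha < y `^ alpha.
Proof.
move=> x0 xy; apply: (gt0_ltr_powR alpha_gt0); rewrite ?nnegrE //.
exact: le_trans (ltW xy).
Qed.

Lemma powR_ge1 (c : R) : 1 <= c -> 1 <= c `^ alpha.
Proof. by move=> c1; have := @ler_powR_alpha 1 c; rewrite powR1; apply. Qed.

Lemma powR3_lt5 : 3 `^ alpha < 5 `^ alpha :> R.
Proof. by rewrite ltr_powR_alpha //; lra. Qed.

Lemma Mhat_gt0 : 0 < Mh.
Proof. by rewrite mulr_gt0 // divr_gt0 ?powR_gt0 // subr_gt0 powR3_lt5. Qed.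

Lemma MhatE : Mh * (5 `^ alpha - 3 `^ alpha) = 40 `^ alpha * Mt.
Proof.
have D0 : 5 `^ alpha - 3 `^ alpha != 0 :> R by rewrite subr_eq0 gt_eqF ?powR3_lt5.
by rewrite /Mhat; field.
Qed.

(* 40 = 8 * 5 and 5^alpha - 3^alpha <= 5^alpha *)
Lemma Mhat_ge : Mt * 8 `^ alpha <= Mh.
Proof.
have D0 : 0 < 5 `^ alpha - 3 `^ alpha :> R by rewrite subr_gt0 powR3_lt5.
rewrite -[Mh](mulfK (lt0r_neq0 D0)) MhatE ler_pdivlMr //.
have -> : 40 `^ alpha = 8 `^ alpha * 5 `^ alpha :> R by rewrite -powRM // -natrM.
rewrite [X in _ <= X]mulrC mulrA ler_wpM2l ?mulr_ge0 ?powR_ge0 ?(ltW Mt_gt0) //.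
by rewrite gerBl powR_ge0.
Qed.

Definition plateau (g : R) := Mh * (5 `^ alpha - 3 `^ alpha) * g `^ alpha.

Lemma plateauE g : plateau g = 40 `^ alpha * Mt * g `^ alpha.
Proof. by rewrite /plateau MhatE. Qed.

Lemma plateau_ge0 g : 0 <= plateau g.
Proof. by rewrite plateauE !mulr_ge0 ?powR_ge0 // ltW. Qed.

Definition ramp (g r : R) := Mh * ((5 * g) `^ alpha - r `^ alpha).

Lemma rampE g r : 0 <= g ->
  Mh * 5 `^ alpha * g `^ alpha - Mh * r `^ alpha = ramp g r.
Proof. by move=> g0; rewrite /ramp powRM //; ring. Qed.

Lemma ramp_le g r r' : 0 <= r -> r <= r' -> ramp g r' <= ramp g r.
Proof.
by move=> r0 rr'; rewrite ler_pM2l ?Mhat_gt0 // lerD2l lerN2 ler_powR_alpha.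
Qed.

Lemma ramp3 g : 0 <= g -> ramp g (3 * g) = plateau g.
Proof. by move=> g0; rewrite /ramp /plateau !powRM //; ring. Qed.

Lemma ramp5 g : ramp g (5 * g) = 0.
Proof. by rewrite /ramp subrr mulr0. Qed.

(* Nonnegativity is only required on the cube: the outermost profile [yS0]
   turns negative beyond radius [5 gamma_1]. *)
Definition bump d (f : 'rV[R]_d -> R) (c : 'rV[R]_d) (g : R) :=
  forall x, [/\ f x <= plateau g, (in_cube x -> 0 <= f x),
    (linf (x - c) <= 3 * g -> f x = plateau g) &
    (5 * g <= linf (x - c) -> f x <= 0)].

Lemma yS_bump d (k : 'I_d -> nat) a :
  bump (yS alpha Mt k a) (ctr R k a) (gam R a.+1).
Proof.
move=> x; rewrite /yS; set r := linf _; set g := gam R a.+1.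
have g0 : 0 < g := gam_gt0 R a.+1.
have r0 : 0 <= r := linf_ge0 _.
rewrite -/(plateau g) rampE ?(ltW g0) //.
have [r3 | r3] := lerP r (3 * g).
  by split=> // [_|r5]; [exact: plateau_ge0 | lra].
have ramp_le_plateau : ramp g r <= plateau g.
  by rewrite -ramp3 ?(ltW g0) //; apply: ramp_le; [lra | exact: ltW].
have [r5 | r5] := lerP r (5 * g).
  by split=> // [_|r5']; rewrite -(ramp5 g); apply: ramp_le => //; lra.
by split=> //; rewrite plateau_ge0.
Qed.

Lemma yS0_bump d : bump (yS0 alpha Mt) (ctr R (@ones d) 0) (gam R 1).
Proof.
move=> x; rewrite /yS0; set r := linf _; set g := gam R 1.
have g0 : 0 < g := gam_gt0 R 1.
have r0 : 0 <= r := linf_ge0 _.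
have g5 : 5 * g = 1 / 2 by rewrite /g gamS gam0; field.
rewrite -/(plateau g) rampE ?(ltW g0) //.
have [r3 | r3] := lerP r (3 * g).
  by split=> // [_|r5]; [exact: plateau_ge0 | lra].
split=> // [|cx|r5].
- by rewrite -ramp3 ?(ltW g0) //; apply: ramp_le; [lra | exact: ltW].
- by rewrite -(ramp5 g); apply: ramp_le; rewrite // g5 cube_dist_ctr0.
- by rewrite -(ramp5 g); apply: ramp_le; lra.
Qed.

Definition pow_below (q h : R) := if h < q then h `^ alpha else 0.

Section BumpDrop.
Variables (d : nat) (f : 'rV[R]_d -> R) (c xs : 'rV[R]_d) (g : R).
Hypotheses (f_bump : bump f c g) (g_gt0 : 0 < g)
  (xs_near : linf (xs - c) <= 5 / 2 * g).

Lemma bump_plateau : f xs = plateau g.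
Proof. by have [_ _ f_in _] := f_bump xs; apply: f_in; move: g_gt0 xs_near; lra. Qed.

Lemma bump_drop_le x : in_cube x ->
  0 <= f xs - f x <= 40 `^ alpha * Mt * pow_below (2 * linf (xs - x)) g.
Proof.
move=> cx; have [f_le f_ge0 f_in _] := f_bump x.
rewrite bump_plateau subr_ge0 f_le /= /pow_below.
case: ifPn => [_ | ]; first by rewrite -plateauE; have := f_ge0 cx; lra.
rewrite -leNgt => far; rewrite mulr0 f_in ?subrr //.
have := linf_dist_triangle x xs c; rewrite (linf_distC x xs); move: xs_near; lra.
Qed.

Lemma bump_drop_far x : 15 / 2 * g <= linf (xs - x) -> plateau g <= f xs - f x.
Proof.
move=> far; have [_ _ _ f_out] := f_bump x.
rewrite bump_plateau; suff : f x <= 0 by lra.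
apply: f_out.
have := linf_dist_triangle xs c x; rewrite (linf_distC c); move: xs_near; lra.
Qed.

End BumpDrop.

Definition rho : R := 5 `^ (- alpha).

Lemma rho_gt0 : 0 < rho.
Proof. exact: powR_gt0. Qed.

Lemma rho_lt1 : rho < 1.
Proof.
rewrite /rho powRN invf_lt1 ?powR_gt0 //.
by have := @ltr_powR_alpha 1 5; rewrite powR1; apply; lra.
Qed.

Lemma powR_gamS a : gam R a.+1 `^ alpha = rho * gam R a `^ alpha.
Proof.
have g0 := ltW (gam_gt0 R a).
rewrite gamS powRM ?invr_ge0 // mulrC /rho powRN; congr (_ * _).
apply: (@mulfI _ (5 `^ alpha)); first by rewrite gt_eqF ?powR_gt0.
by rewrite -powRM ?invr_ge0 // !divff ?powR1 // gt_eqF ?powR_gt0.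
Qed.

Lemma sum_pow_below_gam q s t : 0 <= q ->
  \sum_(s <= j < s + t) pow_below q (gam R j.+1)
    <= Num.min (gam R s.+1) q `^ alpha / (1 - rho).
Proof.
move=> q0; have rho1 := rho_lt1.
have e0 : 0 < 1 - rho by rewrite subr_gt0.
elim: t s => [|t IH] s.
  by rewrite addn0 big_geq // divr_ge0 ?powR_ge0 ?ltW.
rewrite addnS big_ltn ?ltnS ?leq_addr // -addSn.
apply: le_trans (lerD (lexx _) (IH s.+1)) _; rewrite /pow_below.
have m0 u : 0 <= Num.min (gam R u) q by rewrite le_min q0 ltW ?gam_gt0.
case: ifPn => [gq | ]; last first.
  rewrite -leNgt => qg; rewrite add0r (min_r qg) ler_pM2r ?invr_gt0 //.
  by rewrite ler_powR_alpha // ge_min lexx orbT.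
rewrite (min_l (ltW gq)).
have : Num.min (gam R s.+2) q `^ alpha <= rho * gam R s.+1 `^ alpha.
  by rewrite -powR_gamS ler_powR_alpha // ge_min lexx.
have : 0 <= gam R s.+1 `^ alpha := powR_ge0 _ _.
set u := gam R s.+1 `^ alpha; set v := Num.min _ _ `^ alpha => u0 vu.
have -> : u / (1 - rho) = u + rho * u / (1 - rho) by field; rewrite gt_eqF.
by rewrite lerD2l ler_pM2r ?invr_gt0.
Qed.

Lemma plateau_ge_crossing a r : 0 <= r -> r < 15 / 2 * gam R a ->
  Mt * r `^ alpha <= plateau (gam R a.+1).
Proof.
move=> r0 ra; have g0 := gam_gt0 R a.
rewrite plateauE (mulrC (40 `^ alpha)) -mulrA ler_pM2l //.
rewrite -powRM ?(ltW (gam_gt0 _ _)) // ler_powR_alpha // gamS; lra.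
Qed.

Lemma cusp_ge_near a r : 0 <= r -> r <= 15 / 2 * gam R a ->
  Mt * r `^ alpha <= Mh * Num.min r (gam R a) `^ alpha.
Proof.
move=> r0 ra; have g0 := gam_gt0 R a.
have m0 : 0 <= Num.min r (gam R a) by rewrite le_min r0 ltW.
apply: le_trans (ler_wpM2r (powR_ge0 _ _) Mhat_ge).
rewrite -mulrA -powRM // ler_pM2l // ler_powR_alpha //.
by case: (leP r (gam R a)) => _; lra.
Qed.

Lemma drop_const_le M :
  (1 - rho)^-1 * (1 + (5 `^ alpha - 3 `^ alpha)^-1) * 80 `^ alpha <= M / Mt ->
  Mh + 40 `^ alpha * Mt * 2 `^ alpha / (1 - rho) <= M.
Proof.
rewrite ler_pdivlMr // => hM; apply: le_trans hM.
have ie1 : 1 <= (1 - rho)^-1 by rewrite invf_ge1 ?subr_gt0 ?rho_lt1 // gerBl ltW ?rho_gt0.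
have t1 : 1 <= 2 `^ alpha :> R by rewrite powR_ge1 //; lra.
have iD0 : 0 <= (5 `^ alpha - 3 `^ alpha)^-1 :> R.
  by rewrite invr_ge0 subr_ge0 ltW ?powR3_lt5.
have -> : 80 `^ alpha = 2 `^ alpha * 40 `^ alpha :> R by rewrite -powRM // -natrM.
have -> : Mh = 40 `^ alpha * Mt * (5 `^ alpha - 3 `^ alpha)^-1 by rewrite /Mhat; ring.
set ie := (1 - rho)^-1; set iD := _^-1; set t := 2 `^ alpha; set K := 40 `^ alpha.
have -> : ie * (1 + iD) * (t * K) * Mt = K * Mt * iD * (ie * t) + K * Mt * t * ie.
  by ring.
rewrite lerD2r ler_peMr ?mulr_ge0 ?powR_ge0 ?(ltW Mt_gt0) //.
exact: mulr_ege1.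
Qed.

End Profiles.

Section Chain.
Variables (R : realType) (alpha Mt : R) (d A : nat) (k : 'I_d -> nat).
Hypotheses (alpha_gt0 : 0 < alpha) (Mt_gt0 : 0 < Mt) (A_gt0 : (0 < A)%N)
  (kU : inU R A k).
Local Notation Mh := (Mhat alpha Mt).
Local Notation xs := (ctr R k A).
Local Notation y := (yC alpha Mt k A).

Let kk j := iter (A - j) (@parent d) k.
Let cc j := ctr R (kk j) j.
(* the level-[j] term of [yC]; the sum in [yC] runs over [l = A - j] *)
Let T j := if j == 0%N then yS0 alpha Mt else yS alpha Mt (kk j) j.

Lemma inU_chain j : (j <= A)%N -> inU R j (kk j).
Proof.
rewrite /kk => /subnKC; move: (A - j)%N => m; elim: m j => [j | m IH j jm].
  by rewrite addn0 => ->.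
by have /= /andP[/andP[_ ->] _] := IH j.+1 (etrans (addSnnS j m) jm).
Qed.

Lemma chain_step j : (j < A)%N -> linf (cc j.+1 - cc j) <= 2 * gam R j.+1.
Proof.
move=> jA; have /= /andP[_] := inU_chain jA.
by rewrite /cc /kk -(subnSK jA).
Qed.

Lemma chain_dist j : (j <= A)%N -> linf (xs - cc j) <= 5 / 2 * gam R j.+1.
Proof.
have -> : xs = cc A by rewrite /cc /kk subnn.
move/subnKC; move: (A - j)%N => m; elim: m j => [j | m IH j jm].
  by rewrite addn0 => ->; rewrite subrr linf0; have := gam_gt0 R A.+1; lra.
have jA : (j < A)%N by rewrite -jm addnS ltnS leq_addr.
apply: le_trans (linf_dist_triangle _ (cc j.+1) _) _.
have := IH j.+1 (etrans (addSnnS j m) jm); have := chain_step jA.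
rewrite (gamS R j.+1); have := gam_gt0 R j.+1; lra.
Qed.

Lemma chain_root : cc 0 = ctr R (@ones d) 0.
Proof.
have /forallP k1 := inU_chain (leq0n A).
by apply/rowP => i; rewrite !mxE (eqP (k1 i)).
Qed.

Lemma T_bump j : (j < A)%N -> bump alpha Mt (T j) (cc j) (gam R j.+1).
Proof.
rewrite /T; case: eqP => [-> _ | _ _]; last exact: yS_bump.
by rewrite chain_root; apply: yS0_bump.
Qed.

Lemma T_drop_le j x : (j < A)%N -> in_cube x ->
  0 <= T j xs - T j x <= 40 `^ alpha * Mt * pow_below alpha (2 * linf (xs - x)) (gam R j.+1).
Proof.
move=> jA; apply: (bump_drop_le alpha_gt0 (T_bump jA) (gam_gt0 _ _)).
exact: chain_dist (ltnW jA).
Qed.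

Lemma yC_decomp x : y x = yD alpha Mt k A x + \sum_(0 <= j < A) T j x.
Proof.
have levels : \sum_(1 <= l < A) yS alpha Mt (iter l (@parent d) k) (A - l) x
    = \sum_(1 <= j < A) T j x.
  rewrite [RHS]big_nat_rev /=; apply: eq_big_nat => l /andP[l1 lA].
  rewrite add1n subSS /T.
  have -> : (A - l == 0)%N = false by apply/negbTE; rewrite -lt0n subn_gt0.
  by rewrite /kk subKn // ltnW.
by rewrite /yC levels (big_ltn A_gt0) -addrA [_ + yS0 _ _ _]addrC.
Qed.

Lemma yD_drop x :
  yD alpha Mt k A xs - yD alpha Mt k A x = Mh * Num.min (linf (xs - x)) (gam R A) `^ alpha.
Proof.
rewrite /yD subrr linf0 linf_distC; set r := linf (xs - x).
have gA := gam_gt0 R A.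
rewrite ifT ?(ltW gA) // powR0 ?gt_eqF // mulr0 subr0.
by case: (leP r (gam R A)) => _; rewrite ?subr0 //; ring.
Qed.

Lemma yC_drop x : y xs - y x =
  Mh * Num.min (linf (xs - x)) (gam R A) `^ alpha + \sum_(0 <= j < A) (T j xs - T j x).
Proof. by rewrite !yC_decomp sumrB -yD_drop; ring. Qed.

Lemma yC_drop_lower x : in_cube x -> Mt * linf (xs - x) `^ alpha <= y xs - y x.
Proof.
move=> cx; rewrite yC_drop; set r := linf (xs - x).
have r0 : 0 <= r := linf_ge0 _.
have cxs : in_cube xs := ctr_in_cube R (inU_index_bounds kU).
have drop_ge0 (j : 'I_A) : 0 <= T j xs - T j x.
  by have /andP[] := T_drop_le (ltn_ord j) cx.
have cusp_ge0 : 0 <= Mh * Num.min r (gam R A) `^ alpha.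
  by rewrite mulr_ge0 ?powR_ge0 // ltW // Mhat_gt0.
have [near | far] := lerP r (15 / 2 * gam R A).
  rewrite -[X in X <= _]addr0 lerD ?cusp_ge_near // big_mkord.
  by apply: sumr_ge0 => j _.
have r1 : r < 15 / 2 * gam R 0 by rewrite gam0 (le_lt_trans (linf_cube_dist cxs cx)) //; lra.
have [a aA /andP[ar ra]] := @exists_crossing _ (fun j => 15 / 2 * gam R j) r A (ltW far) r1.
apply: le_trans (plateau_ge_crossing alpha_gt0 Mt_gt0 r0 ra) _.
rewrite -[X in X <= _]add0r lerD // big_mkord (bigD1 (Ordinal aA)) //=.
rewrite -[X in X <= _]addr0; apply: lerD; last by apply: sumr_ge0 => j _.
have xs_near := chain_dist (ltnW aA).
exact: (bump_drop_far (T_bump aA) (gam_gt0 _ _) xs_near ar).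
Qed.

Lemma yC_drop_upper x : in_cube x ->
  y xs - y x <= (Mh + 40 `^ alpha * Mt * 2 `^ alpha / (1 - rho alpha)) * linf (xs - x) `^ alpha.
Proof.
move=> cx; rewrite yC_drop mulrDl; set r := linf (xs - x).
have r0 : 0 <= r := linf_ge0 _.
apply: lerD.
  rewrite ler_pM2l ?Mhat_gt0 // ler_powR_alpha ?ge_min ?lexx //.
  by rewrite le_min r0 ltW ?gam_gt0.
have drop_le j : (0 <= j < A)%N ->
    T j xs - T j x <= 40 `^ alpha * Mt * pow_below alpha (2 * r) (gam R j.+1).
  by case/andP=> _ jA; have /andP[] := T_drop_le jA cx.
apply: le_trans (ler_sum_nat drop_le) _; rewrite -mulr_sumr -(add0n A).
have q0 : 0 <= 2 * r by rewrite mulr_ge0.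
have K0 : 0 <= 40 `^ alpha * Mt by rewrite mulr_ge0 ?powR_ge0 ?ltW.
have ie0 : 0 <= (1 - rho alpha)^-1 by rewrite invr_ge0 subr_ge0 ltW ?rho_lt1.
have min_le : Num.min (gam R 1) (2 * r) `^ alpha <= 2 `^ alpha * r `^ alpha.
  by rewrite -powRM // ler_powR_alpha ?ge_min ?lexx ?orbT // le_min q0 ltW ?gam_gt0.
apply: le_trans (ler_wpM2l K0 (sum_pow_below_gam alpha_gt0 0 A q0)) _.
rewrite (_ : _ * r `^ alpha = 40 `^ alpha * Mt * (2 `^ alpha * r `^ alpha / (1 - rho alpha))).
  by apply: ler_wpM2l => //; apply: ler_wpM2r.
by ring.
Qed.

End Chain.

Theorem lemma5 (R : realType) (d n : nat) (alpha M Mt : R) (k : 'I_d -> nat) :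
  (1 <= d)%N -> (1 <= n)%N ->
  0 < alpha -> 0 < M -> 0 < Mt ->
  (1 - 5 `^ (- alpha))^-1 * (1 + (5 `^ alpha - 3 `^ alpha)^-1) * 80 `^ alpha <= M / Mt ->
  inU R (abar d n) k ->
  let a := abar d n in
  let y := yC alpha Mt k a in
  let xs := ctr R k a in
  [/\ in_cube xs,
      (forall x : 'rV[R]_d, in_cube x -> x != xs -> y x < y xs) &
      (forall x : 'rV[R]_d, in_cube x ->
         Mt * linf (xs - x) `^ alpha <= `|y xs - y x| <= M * linf (xs - x) `^ alpha)].
Proof.
move=> _ _ alpha_gt0 _ Mt_gt0 hM kU a y xs.
have a_gt0 : (0 < a)%N by rewrite /a /abar addn2.
have lower := yC_drop_lower alpha_gt0 Mt_gt0 a_gt0 kU.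
have upper := yC_drop_upper alpha_gt0 Mt_gt0 a_gt0 kU.
split.
- by rewrite /xs; apply: ctr_in_cube; apply: inU_index_bounds kU.
- move=> x cx xxs; rewrite -subr_gt0; apply: lt_le_trans (lower x cx).
  by rewrite mulr_gt0 ?powR_gt0 ?linf_dist_gt0 // eq_sym.
- move=> x cx; have lo := lower x cx.
  rewrite ger0_norm; last by apply: le_trans lo; rewrite mulr_ge0 ?powR_ge0 ?ltW.
  rewrite lo /=; apply: le_trans (upper x cx) _.
  by apply: ler_wpM2r; [exact: powR_ge0 | exact: drop_const_le].
Qed.
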